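(* Let $T:V\to\mathfrak g$ be a relative Rota-Baxter operator on a Lie-Yamaguti algebra $(\mathfrak g,[\cdot,\cdot],[\![\cdot,\cdot,\cdot]\!])$ with respect to a representation $(V;\rho,\mu)$. Define $*:\otimes^2V\to V$ and $\{\cdot,\cdot,\cdot\}:\otimes^3V\to V$ by $u*v=\rho(Tu)v$ and $\{u,v,w\}=\mu(Tv,Tw)u$ for $u,v,w\in V$. Then $(V,*,\{\cdot,\cdot,\cdot\})$ is a pre-Lie-Yamaguti algebra.
   Context: All vector spaces are over a field of characteristic $0$. A Lie-Yamaguti algebra is a vector space $\mathfrak g$ with a bilinear skew-symmetric $[\cdot,\cdot]$ and a trilinear $[\![\cdot,\cdot,\cdot]\!]$ skew-symmetric in its first two arguments such that for all $x,y,z,w,t$: (1) $[[x,y],z]+[[y,z],x]+[[z,x],y]+[\![x,y,z]\!]+[\![y,z,x]\!]+[\![z,x,y]\!]=0$; (2) $[\![[x,y],z,w]\!]+[\![[y,z],x,w]\!]+[\![[z,x],y,w]\!]=0$; (3) $[\![x,y,[z,w]]\!]=[[\![x,y,z]\!],w]+[z,[\![x,y,w]\!]]$; (4) $[\![x,y,[\![z,w,t]\!]]\!]=[\![[\![x,y,z]\!],w,t]\!]+[\![z,[\![x,y,w]\!],t]\!]+[\![z,w,[\![x,y,t]\!]]\!]$. A representation $(V;\rho,\mu)$ of $\mathfrak g$ is a linear $\rho:\mathfrak g\to\mathfrak{gl}(V)$ and bilinear $\mu:\otimes^2\mathfrak g\to\mathfrak{gl}(V)$ such that, with $D_{\rho,\mu}(x,y):=\mu(y,x)-\mu(x,y)+[\rho(x),\rho(y)]-\rho([x,y])$: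 $\mu([x,y],z)-\mu(x,z)\rho(y)+\mu(y,z)\rho(x)=0$; $\mu(x,[y,z])-\rho(y)\mu(x,z)+\rho(z)\mu(x,y)=0$; $\rho([\![x,y,z]\!])=[D_{\rho,\mu}(x,y),\rho(z)]$; $\mu(z,w)\mu(x,y)-\mu(y,w)\mu(x,z)-\mu(x,[\![y,z,w]\!])+D_{\rho,\mu}(y,z)\mu(x,w)=0$; $\mu([\![x,y,z]\!],w)+\mu(z,[\![x,y,w]\!])=[D_{\rho,\mu}(x,y),\mu(z,w)]$. A relative Rota-Baxter operator on $\mathfrak g$ with respect to $(V;\rho,\mu)$ is a linear map $T:V\to\mathfrak g$ with $[Tu,Tv]=T(\rho(Tu)v-\rho(Tv)u)$ and $[\![Tu,Tv,Tw]\!]=T(D_{\rho,\mu}(Tu,Tv)w+\mu(Tv,Tw)u-\mu(Tu,Tw)v)$ for all $u,v,w\in V$. A pre-Lie-Yamaguti algebra is a vector space $A$ with a bilinear operation $*$ and a trilinear operation $\{\cdot,\cdot,\cdot\}$ such that, writing $[x,y]_C=x*y-y*x$, $(x,y,z)=(x*y)*z-x*(y*z)$ and $\{x,y,z\}_D=\{z,y,x\}-\{z,x,y\}+(y,x,z)-(x,y,z)$, for all $x,y,z,w,t\in A$: (P1) $\{z,[x,y]_C,w\}-\{y*z,x,w\}+\{x*z,y,w\}=0$; (P2) $\{x,y,[z,w]_C\}=z*\{x,y,w\}-w*\{x,y,z\}$; (P3) $\{\{x,y,z\},w,t\}-\{\{x,y,w\},z,t\}-\{x,y,\{z,w,t\}_D\}-\{x,y,\{z,w,t\}\}+\{x,y,\{w,z,t\}\}+\{z,w,\{x,y,t\}\}_D=0$;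 (P4) $\{z,\{x,y,w\}_D,t\}+\{z,\{x,y,w\},t\}-\{z,\{y,x,w\},t\}+\{z,w,\{x,y,t\}_D\}+\{z,w,\{x,y,t\}\}-\{z,w,\{y,x,t\}\}=\{x,y,\{z,w,t\}\}_D-\{\{x,y,z\}_D,w,t\}$; (P5) $\{x,y,z\}_D*w+\{x,y,z\}*w-\{y,x,z\}*w=\{x,y,z*w\}_D-z*\{x,y,w\}_D$. *)

From HB Require Import structures.
From mathcomp Require Import all_boot all_order all_algebra.
Set Implicit Arguments. Unset Strict Implicit. Unset Printing Implicit Defensive.
Import GRing.Theory.
Local Open Scope ring_scope.

Section Defs.
Variable K : fieldType.

Definition lin1 (U W : lmodType K) (f : U -> W) : Prop :=
  forall (a : K) (x y : U), f (a *: x + y) = a *: f x + f y.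
Definition lin2 (U1 U2 W : lmodType K) (f : U1 -> U2 -> W) : Prop :=
  (forall y, lin1 (fun x => f x y)) /\ (forall x, lin1 (f x)).
Definition lin3 (U1 U2 U3 W : lmodType K) (f : U1 -> U2 -> U3 -> W) : Prop :=
  (forall y z, lin1 (fun x => f x y z)) /\ (forall x z, lin1 (fun y => f x y z))
  /\ (forall x y, lin1 (f x y)).

Definition is_LieYamaguti (g : lmodType K) (br : g -> g -> g)
    (tr : g -> g -> g -> g) : Prop :=
  [/\ lin2 br, lin3 tr,
      (forall x y, br x y = - br y x),
      (forall x y z, tr x y z = - tr y x z) &
  [/\ (forall x y z, br (br x y) z + br (br y z) x + br (br z x) y
                     + tr x y z + tr y z x + tr z x y = 0),
      (forall x y z w, tr (br x y) z w + tr (br y z) x w + tr (br z x) y w = 0),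
      (forall x y z w, tr x y (br z w) = br (tr x y z) w + br z (tr x y w)) &
      (forall x y z w t, tr x y (tr z w t)
          = tr (tr x y z) w t + tr z (tr x y w) t + tr z w (tr x y t))]].

Definition Drm (g V : lmodType K) (br : g -> g -> g) (rho : g -> V -> V)
    (mu : g -> g -> V -> V) (x y : g) (v : V) : V :=
  mu y x v - mu x y v + (rho x (rho y v) - rho y (rho x v)) - rho (br x y) v.

(* representation (V; rho, mu): rho linear g -> gl(V), mu bilinear g x g -> gl(V);
   identities in gl(V) are stated pointwise on v : V, products are compositions *)
Definition is_LYrep (g V : lmodType K) (br : g -> g -> g) (tr : g -> g -> g -> g)
    (rho : g -> V -> V) (mu : g -> g -> V -> V) : Prop :=
  let D := Drm br rho mu in
  [/\ lin2 rho, lin3 mu,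
      (forall x y z v, mu (br x y) z v - mu x z (rho y v) + mu y z (rho x v) = 0),
      (forall x y z v, mu x (br y z) v - rho y (mu x z v) + rho z (mu x y v) = 0) &
  [/\ (forall x y z v, rho (tr x y z) v = D x y (rho z v) - rho z (D x y v)),
      (forall x y z w v, mu z w (mu x y v) - mu y w (mu x z v)
                          - mu x (tr y z w) v + D y z (mu x w v) = 0) &
      (forall x y z w v, mu (tr x y z) w v + mu z (tr x y w) v
                          = D x y (mu z w v) - mu z w (D x y v))]].

Definition is_relRB (g V : lmodType K) (br : g -> g -> g) (tr : g -> g -> g -> g)
    (rho : g -> V -> V) (mu : g -> g -> V -> V) (T : V -> g) : Prop :=
  [/\ lin1 T,
      (forall u v, br (T u) (T v) = T (rho (T u) v - rho (T v) u)) &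
      (forall u v w, tr (T u) (T v) (T w)
          = T (Drm br rho mu (T u) (T v) w + mu (T v) (T w) u - mu (T u) (T w) v))].

Definition is_preLieYamaguti (A : lmodType K) (m : A -> A -> A)
    (tb : A -> A -> A -> A) : Prop :=
  let brC := fun x y => m x y - m y x in
  let ass := fun x y z => m (m x y) z - m x (m y z) in
  let tbD := fun x y z => tb z y x - tb z x y + ass y x z - ass x y z in
  [/\ lin2 m, lin3 tb,
      (forall x y z w, tb z (brC x y) w - tb (m y z) x w + tb (m x z) y w = 0),
      (forall x y z w, tb x y (brC z w) = m z (tb x y w) - m w (tb x y z)) &
  [/\ (forall x y z w t, tb (tb x y z) w t - tb (tb x y w) z t - tb x y (tbD z w t)
          - tb x y (tb z w t) + tb x y (tb w z t) + tbD z w (tb x y t) = 0),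
      (forall x y z w t, tb z (tbD x y w) t + tb z (tb x y w) t - tb z (tb y x w) t
          + tb z w (tbD x y t) + tb z w (tb x y t) - tb z w (tb y x t)
          = tbD x y (tb z w t) - tb (tbD x y z) w t) &
      (forall x y z w, m (tbD x y z) w + m (tb x y z) w - m (tb y x z) w
          = tbD x y (m z w) - m z (tbD x y w))]].

End Defs.

From mathcomp Require Import all_boot all_order all_algebra.
Import GRing.Theory.
Local Open Scope ring_scope.

(* Every identity of the induced structure is an identity of the representation
   evaluated at T-images: [T] intertwines [u * v - v * u] with the bracket, and
   [T ({x,y,z}_D + {x,y,z} - {y,x,z})] with the ternary bracket, while the
   operator [{x,y,-}_D] of the induced structure is [D_{rho,mu}(Tx, Ty)].  Since
   [rho] and [mu] are linear, the axioms (P1)-(P5) become the five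
   representation axioms at [T x, T y, ...]. *)

Section Lin1.
Variables (K : fieldType) (U W X : lmodType K).

Lemma lin1_comp (f : U -> W) (h : W -> X) :
  lin1 f -> lin1 h -> lin1 (fun x => h (f x)).
Proof. by move=> lf lh a x y; rewrite lf lh. Qed.

Variable f : U -> W.
Hypothesis lf : lin1 f.

Lemma lin1D x y : f (x + y) = f x + f y.
Proof. by have := lf 1 x y; rewrite !scale1r. Qed.

Lemma lin1B x y : f (x - y) = f x - f y.
Proof. by rewrite addrC -scaleN1r lf scaleN1r addrC. Qed.

End Lin1.
Arguments lin1_comp {K U W X f h}.
Arguments lin1D {K U W f}.
Arguments lin1B {K U W f}.

Section InducedPreLieYamaguti.
Variables (K : fieldType) (g V : lmodType K).
Variables (br : g -> g -> g) (tr : g -> g -> g -> g).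
Variables (rho : g -> V -> V) (mu : g -> g -> V -> V) (T : V -> g).
Hypothesis rep : is_LYrep br tr rho mu.
Hypothesis rb : is_relRB br tr rho mu T.

Definition rbmul (u v : V) : V := rho (T u) v.
Definition rbtri (u v w : V) : V := mu (T v) (T w) u.
Definition rbass (x y z : V) : V := rbmul (rbmul x y) z - rbmul x (rbmul y z).
Definition rbD (x y z : V) : V :=
  rbtri z y x - rbtri z x y + rbass y x z - rbass x y z.

Let T_lin : lin1 T. Proof. by case: rb. Qed.
Let rho_lin : lin2 rho. Proof. by case: rep. Qed.
Let mu_lin : lin3 mu. Proof. by case: rep. Qed.

Let rhoT_linl w : lin1 (fun u => rho (T u) w).
Proof. exact: lin1_comp T_lin (rho_lin.1 w). Qed.
Let muT_linl w v : lin1 (fun u => mu (T u) w v).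
Proof. exact: lin1_comp T_lin (mu_lin.1 w v). Qed.
Let muT_linr w v : lin1 (fun u => mu w (T u) v).
Proof. exact: lin1_comp T_lin (mu_lin.2.1 w v). Qed.

Lemma rbmul_lin2 : lin2 rbmul.
Proof. by split=> [w|u]; [exact: rhoT_linl | exact: rho_lin.2]. Qed.

Lemma rbtri_lin3 : lin3 rbtri.
Proof.
split=> [v w|]; first exact: mu_lin.2.2.
by split=> [u w|u v]; [exact: muT_linl | exact: muT_linr].
Qed.

Lemma T_rbcomm x y : T (rbmul x y - rbmul y x) = br (T x) (T y).
Proof. by case: rb => _ -> _. Qed.

Lemma rbD_Drm x y z : rbD x y z = Drm br rho mu (T x) (T y) z.
Proof.
rewrite /rbD /rbass /rbtri /rbmul /Drm -T_rbcomm (lin1B (rhoT_linl z)).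
set c := rho (T (rho (T y) x)) z; set f := rho (T x) (rho (T y) z).
by rewrite !opprB -!addrA (addrCA c) (addrCA f) (addrCA c).
Qed.

Lemma T_rbtri_combination x y z :
  T (rbD x y z + rbtri x y z - rbtri y x z) = tr (T x) (T y) (T z).
Proof. by case: rb => _ _ ->; rewrite rbD_Drm. Qed.

Lemma rbtri_rbcomm_mid x y z w :
  rbtri z (rbmul x y - rbmul y x) w - rbtri (rbmul y z) x w + rbtri (rbmul x z) y w = 0.
Proof. by case: rep => _ _ R1 _ _; rewrite /rbtri T_rbcomm R1. Qed.

Lemma rbtri_rbcomm_last x y z w :
  rbtri x y (rbmul z w - rbmul w z) = rbmul z (rbtri x y w) - rbmul w (rbtri x y z).
Proof.
case: rep => _ _ _ R2 _; apply/eqP; rewrite -subr_eq0 opprB addrA addrAC.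
by rewrite /rbtri T_rbcomm R2.
Qed.

Lemma rbtri_rbtri x y z w t :
  rbtri (rbtri x y z) w t - rbtri (rbtri x y w) z t - rbtri x y (rbD z w t)
    - rbtri x y (rbtri z w t) + rbtri x y (rbtri w z t) + rbD z w (rbtri x y t) = 0.
Proof.
case: rep => _ _ _ _ [_ R4 _].
have := R4 (T y) (T z) (T w) (T t) x; rewrite -T_rbtri_combination.
rewrite (lin1B (muT_linr (T y) x)) (lin1D (muT_linr (T y) x)).
by rewrite !rbD_Drm !opprD opprK !addrA.
Qed.

Lemma rbtri_rbD x y z w t :
  rbtri z (rbD x y w) t + rbtri z (rbtri x y w) t - rbtri z (rbtri y x w) t
    + rbtri z w (rbD x y t) + rbtri z w (rbtri x y t) - rbtri z w (rbtri y x t)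
  = rbD x y (rbtri z w t) - rbtri (rbD x y z) w t.
Proof.
case: rep => _ _ _ _ [_ _ R5].
have := R5 (T x) (T y) (T w) (T t) z; rewrite -!T_rbtri_combination.
rewrite (lin1B (muT_linl (T t) z)) (lin1D (muT_linl (T t) z)).
rewrite (lin1B (muT_linr (T w) z)) (lin1D (muT_linr (T w) z)).
by rewrite !rbD_Drm !addrA.
Qed.

Lemma rbmul_rbD x y z w :
  rbmul (rbD x y z) w + rbmul (rbtri x y z) w - rbmul (rbtri y x z) w
  = rbD x y (rbmul z w) - rbmul z (rbD x y w).
Proof.
case: rep => _ _ _ _ [R3 _ _].
rewrite -(lin1D (rhoT_linl w)) -(lin1B (rhoT_linl w)) /= T_rbtri_combination.
by rewrite !rbD_Drm R3.
Qed.

Lemma rb_preLieYamaguti : is_preLieYamaguti rbmul rbtri.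
Proof.
split; [exact: rbmul_lin2 | exact: rbtri_lin3 | exact: rbtri_rbcomm_mid
       | exact: rbtri_rbcomm_last | split].
- exact: rbtri_rbtri.
- exact: rbtri_rbD.
- exact: rbmul_rbD.
Qed.

End InducedPreLieYamaguti.

Arguments rb_preLieYamaguti {K g V br tr rho mu T}.

Theorem theorem3p13 (K : fieldType) (Hchar : [pchar K] =i pred0)
    (g V : lmodType K) (br : g -> g -> g) (tr : g -> g -> g -> g)
    (rho : g -> V -> V) (mu : g -> g -> V -> V) (T : V -> g) :
  is_LieYamaguti br tr ->
  is_LYrep br tr rho mu ->
  is_relRB br tr rho mu T ->
  is_preLieYamaguti (fun u v => rho (T u) v) (fun u v w => mu (T v) (T w) u).
Proof. by move=> _; exact: rb_preLieYamaguti. Qed.
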